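(* Consider the control system $\dot x=f(x,u)$, $t\ge0$, where $f\colon\mathcal{X}\times\mathcal{U}\to\mathbb{R}^n$ is continuous on a neighborhood $\mathcal{X}\times\mathcal{U}\subseteq\mathbb{R}^n\times\mathbb{R}^m$ of the origin and $f(0,0)=0$. Let $d$ be a nonnegative function defined on a neighborhood of $0\in\mathbb{R}^n$. Suppose the system is locally asymptotically stabilizable and $u$ is a stabilizing feedback (in the sense described in the context) satisfying $\|u(x)\|\le d(x)$ for all $x$ with $\|x\|$ sufficiently small. Write $F_u(x):=f(x,u(x))$, $$g(r):=\Gamma_0\big(f(\mathbb{B}_r(0,0))\big),\qquad h(r):=\sup_{y\in\mathbb{B}_r(0)}\|F_u^{-1}(y)\|.$$ Then $$r\ \le\ g\left(\sqrt{\|d\|_{\mathbb{B}_{h(r)}(0)}^2+h(r)^2}\right)\quad\text{for all sufficiently small } r>0.$$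
   Context: $\mathbb{B}_r(z)$ denotes the open ball of radius $r$ centered at $z$; on $\mathbb{R}^n\times\mathbb{R}^m$ the norm is $\|(x,u)\|=\sqrt{\|x\|^2+\|u\|^2}$. For a set $K$ in a normed space and a point $z^*$, the inradius is $\Gamma_{z^*}(K)=\sup\{\rho\ge0:\mathbb{B}_\rho(z^* )\subseteq K\}$. For a function $d$, $\|d\|_{\mathbb{B}_\rho(0)}:=\sup_{x\in\mathbb{B}_\rho(0)}d(x)$. A stabilizing feedback is a map $u\colon\mathcal{O}\to\mathcal{U}$ on a neighborhood $\mathcal{O}\subseteq\mathcal{X}$ of the origin with $u(0)=0$ such that the origin is a locally asymptotically stable equilibrium (Lyapunov stable and locally attractive) of the closed-loop system $\dot x=f(x,u(x))$, and such that $x\mapsto f(x,u(x))$ is continuous and $\dot x=f(x,u(x))$ has a unique solution for all $t$ from every initial condition in a neighborhood of the origin ($u$ itself need not be continuous); the system is locally asymptotically stabilizable if such a $u$ exists. For such $u$, $F_u$ restricted to a suitable neighborhood of the origin is a homeomorphism onto a neighborhood of the origin, and $F_u^{-1}$ denotes this local inverse. *)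

From HB Require Import structures.
From mathcomp Require Import all_boot all_order all_algebra.
From mathcomp Require Import all_classical all_reals all_analysis.
Set Implicit Arguments. Unset Strict Implicit. Unset Printing Implicit Defensive.
Import Order.TTheory GRing.Theory Num.Theory.
Import numFieldNormedType.Exports.
Local Open Scope classical_set_scope.
Local Open Scope ring_scope.

Section Defs.
Variable R : realType.

Definition enorm (n : nat) (v : 'rV[R]_n) : R :=
  Num.sqrt (\sum_(i < n) (v ord0 i) ^+ 2).

Definition pnorm (n m : nat) (z : 'rV[R]_n * 'rV[R]_m) : R :=
  Num.sqrt (enorm z.1 ^+ 2 + enorm z.2 ^+ 2).

Definition eball (n : nat) (z : 'rV[R]_n) (r : R) : set 'rV[R]_n :=
  [set y | enorm (y - z) < r].

Definition inradius (n : nat) (z : 'rV[R]_n) (K : set 'rV[R]_n) : \bar R :=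
  ereal_sup [set rho%:E | rho in [set rho : R | 0 <= rho /\ eball z rho `<=` K]].

Definition is_solution (n : nat) (O : set 'rV[R]_n) (F : 'rV[R]_n -> 'rV[R]_n)
  (phi : R -> 'rV[R]_n) : Prop :=
  {within [set t : R | 0 <= t], continuous phi} /\
  (forall t : R, 0 < t -> is_derive t (1 : R) phi (F (phi t))) /\
  (forall t : R, 0 <= t -> O (phi t)).

Definition Fu (n m : nat) (f : 'rV[R]_n * 'rV[R]_m -> 'rV[R]_n)
  (u : 'rV[R]_n -> 'rV[R]_m) (x : 'rV[R]_n) : 'rV[R]_n := f (x, u x).

Definition stabilizing_feedback (n m : nat) (f : 'rV[R]_n * 'rV[R]_m -> 'rV[R]_n)
  (X : set 'rV[R]_n) (U : set 'rV[R]_m) (O : set 'rV[R]_n)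
  (u : 'rV[R]_n -> 'rV[R]_m) : Prop :=
  let F := Fu f u in
  (nbhs (0 : 'rV[R]_n) O /\ O `<=` X) /\
      ((forall x, O x -> U (u x)) /\ u 0 = 0) /\
      {within O, continuous F} /\
      (exists N : set 'rV[R]_n, nbhs (0 : 'rV[R]_n) N /\
         forall x0, N x0 ->
           (exists phi, is_solution O F phi /\ phi 0 = x0) /\
           (forall phi psi, is_solution O F phi -> is_solution O F psi ->
              phi 0 = x0 -> psi 0 = x0 -> forall t : R, 0 <= t -> phi t = psi t)) /\
      (forall eps : R, 0 < eps -> exists2 del : R, 0 < del &
         forall phi, is_solution O F phi -> enorm (phi 0) < del ->
           forall t : R, 0 <= t -> enorm (phi t) < eps) /\
      (exists2 del : R, 0 < del &
         forall phi, is_solution O F phi -> enorm (phi 0) < del ->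
           phi t @[t --> +oo] --> (0 : 'rV[R]_n)).

Definition ehypot (a b : \bar R) : \bar R :=
  if (a \is a fin_num) && (b \is a fin_num)
  then (Num.sqrt (fine a ^+ 2 + fine b ^+ 2))%:E else +oo%E.

End Defs.

From HB Require Import structures.
From mathcomp Require Import all_boot all_order all_algebra.
From mathcomp Require Import all_classical all_reals all_analysis.
From mathcomp Require Import ring lra.
Set Implicit Arguments. Unset Strict Implicit. Unset Printing Implicit Defensive.
Import Order.TTheory GRing.Theory Num.Theory.
Import numFieldNormedType.Exports.
Local Open Scope classical_set_scope.
Local Open Scope ring_scope.

(** Every point y of the ball B_r(0) has the preimage z = (x, u x) under f,
    where x = F_u^-1 y.  Here |x| <= h(r), and the inequality is strict when
    x <> 0: the preimage under F_u of B_r(0) is a neighbourhood of x, so it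
    contains a point (1 + c) x whose image lies in B_r(0).  Hence also
    |u x| <= d x <= |d|_{B_h(r)}, so |z| < sqrt(|d|^2 + h(r)^2) and
    B_r(0) is contained in the image under f of the ball of that radius. *)

Section EuclideanNorm.
Variables (R : realType) (n : nat).
Implicit Types (v x : 'rV[R]_n) (S : set 'rV[R]_n).

Lemma enorm_ge0 v : 0 <= enorm v.
Proof. exact: sqrtr_ge0. Qed.

Lemma enorm0 : enorm (0 : 'rV[R]_n) = 0.
Proof. by rewrite /enorm big1 ?sqrtr0 // => i _; rewrite mxE expr0n. Qed.

Lemma enormZ (c : R) v : enorm (c *: v) = `|c| * enorm v.
Proof.
rewrite /enorm (eq_bigr (fun i => c ^+ 2 * v ord0 i ^+ 2)) => [|i _]; last first.
  by rewrite mxE exprMn.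
by rewrite -mulr_sumr sqrtrM ?sqr_ge0 // sqrtr_sqr.
Qed.

Lemma normr_le_enorm v : `|v| <= enorm v.
Proof.
rewrite [leLHS]/Num.Def.normr /= mx_normrE.
apply: bigmax_le => [|[i j] _ /=]; first exact: enorm_ge0.
rewrite (ord1 i) /enorm -sqrtr_sqr ler_sqrt ?sumr_ge0 // => [|k _]; last first.
  exact: sqr_ge0.
by rewrite (bigD1 j) //= lerDl sumr_ge0 // => k _; rewrite sqr_ge0.
Qed.

Lemma enorm_eq0 v : (enorm v == 0) = (v == 0).
Proof.
apply/eqP/eqP => [v0|->]; last exact: enorm0.
by apply/normr0_eq0/le_anti; rewrite normr_ge0 andbT -v0 normr_le_enorm.
Qed.

Lemma continuous_enorm : continuous (@enorm R n).
Proof.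
move=> v; apply: (continuous_comp _ (@sqrt_continuous R _)).
apply: continuous_big => [|i _ w]; first exact: add_continuous.
exact: continuous_comp (@coord_continuous R 1 n ord0 i w) (@exprn_continuous R 2 _).
Qed.

Lemma nbhs_enormP x S : nbhs x S ->
  exists2 e : R, 0 < e & forall y, enorm (y - x) < e -> S y.
Proof.
move=> /nbhs_ballP[e e_gt0 xeS]; exists e => // y yxe; apply: xeS.
by rewrite -ball_normE /ball_ /= distrC (le_lt_trans (normr_le_enorm _)).
Qed.

Lemma near_enorm_lt x (r : R) : enorm x < r -> \forall y \near x, enorm y < r.
Proof. by move=> xr; have := cvgr_lt _ (@continuous_enorm x) _ xr; exact. Qed.

Lemma nbhs_exists_enorm_gt x S : x != 0 -> nbhs x S ->
  exists2 z, S z & enorm x < enorm z.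
Proof.
move=> x_neq0 /nbhs_enormP[e e_gt0 xeS].
have x_gt0 : 0 < enorm x by rewrite lt_def enorm_eq0 x_neq0 enorm_ge0.
pose c := e / (2 * enorm x).
have c_gt0 : 0 < c by rewrite divr_gt0 ?mulr_gt0.
exists ((1 + c) *: x); last first.
  rewrite enormZ gtr0_norm; last by rewrite addr_gt0.
  by rewrite mulrDl mul1r ltrDl mulr_gt0.
apply: xeS; rewrite scalerDl scale1r addrAC subrr add0r enormZ gtr0_norm //.
have -> : c * enorm x = e / 2 by rewrite /c; field; rewrite gt_eqF.
lra.
Qed.

End EuclideanNorm.
Arguments enorm0 {R n}.

Lemma open_within_continuous_at (T U : topologicalType) (A B : set T)
    (F : T -> U) x :
  open A -> A `<=` B -> {within B, continuous F} -> A x -> {for x, continuous F}.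
Proof.
move=> oA AB /(continuous_subspaceW AB).
by rewrite continuous_open_subspace // => /(_ x (mem_set _)); apply.
Qed.

Section Hypot.
Variable R : realType.
Local Open Scope ereal_scope.

Lemma ehypot_gt0 (A B : \bar R) : (A \is a fin_num -> 0 < B) -> 0 < ehypot A B.
Proof.
rewrite /ehypot; case: ifPn => [/andP[A_fin B_fin] /(_ A_fin)|_ _]; last exact: ltry.
rewrite -(fineK B_fin) !lte_fin sqrtr_gt0 => fB_gt0.
by rewrite ltr_pwDr ?sqr_ge0 ?exprn_gt0.
Qed.

Lemma lt_ehypot (a b : R) (A B : \bar R) : (0 <= a)%R -> (0 <= b)%R ->
  a%:E <= A -> b%:E < B -> (Num.sqrt (a ^+ 2 + b ^+ 2))%:E < ehypot A B.
Proof.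
move=> a_ge0 b_ge0 aA bB; rewrite /ehypot.
case: ifPn => [/andP[A_fin B_fin]|_]; last exact: ltry.
move: aA bB; rewrite -(fineK A_fin) -(fineK B_fin) lee_fin !lte_fin => aA bB.
rewrite ltr_sqrt; nra.
Qed.

End Hypot.

Lemma ehypot_sup_enorm_gt0 (R : realType) (n : nat) (D : set 'rV[R]_n)
    (d : 'rV[R]_n -> R) (B : \bar R) :
  (0 < ehypot (ereal_sup [set (d x)%:E | x in [set x | D x /\ ((enorm x)%:E < B)%E]]) B)%E.
Proof.
apply: ehypot_gt0 => sup_fin.
have [_ [x [_ xB] _]] : [set (d x)%:E | x in [set x | D x /\ ((enorm x)%:E < B)%E]] !=set0.
  by apply/set0P; apply: contraTneq sup_fin => ->; rewrite ereal_sup0.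
by apply: le_lt_trans xB; rewrite lee_fin enorm_ge0.
Qed.

Lemma enorm_lt_sup_inverse (R : realType) (n : nat)
    (F G : 'rV[R]_n -> 'rV[R]_n) (V W : set 'rV[R]_n) (x : 'rV[R]_n) (r : R) :
  open V -> (forall z, V z -> W (F z) /\ G (F z) = z) ->
  V x -> {for x, continuous F} -> x != 0 -> enorm (F x) < r ->
  ((enorm x)%:E < ereal_sup [set (enorm (G y))%:E | y in [set y | W y /\ (enorm y < r)%R]])%E.
Proof.
move=> oV GK Vx Fx_cont x_neq0 Fxr.
have near_x : nbhs x [set z | V z /\ enorm (F z) < r].
  have Fx_near : nbhs x [set z | enorm (F z) < r] := Fx_cont _ (near_enorm_lt Fxr).
  by apply: filterI Fx_near; apply: open_nbhs_nbhs.
have [z [Vz Fzr] xz] := nbhs_exists_enorm_gt x_neq0 near_x.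
have [Wz GFz] := GK z Vz.
apply: (@lt_le_trans _ _ (enorm z)%:E); first by rewrite lte_fin.
by apply: ereal_sup_ubound; exists (F z); rewrite ?GFz.
Qed.

Theorem theorem4 (R : realType) (n m : nat)
  (f : 'rV[R]_n * 'rV[R]_m -> 'rV[R]_n)
  (X : set 'rV[R]_n) (U : set 'rV[R]_m)
  (D0 : set 'rV[R]_n) (d : 'rV[R]_n -> R)
  (O : set 'rV[R]_n) (u : 'rV[R]_n -> 'rV[R]_m)
  (V W : set 'rV[R]_n) (Finv : 'rV[R]_n -> 'rV[R]_n) :
  open X -> X 0 -> open U -> U 0 ->
  {within X `*` U, continuous f} ->
  f (0, 0) = 0 ->
  nbhs (0 : 'rV[R]_n) D0 -> (forall x, D0 x -> 0 <= d x) ->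
  stabilizing_feedback f X U O u ->
  (exists2 del : R, 0 < del &
     forall x, enorm x < del -> enorm (u x) <= d x) ->
  (* F_u restricted to V is a homeomorphism onto W, with inverse Finv *)
  open V -> V 0 -> V `<=` O -> open W -> W 0 ->
  (forall x, V x -> W (Fu f u x) /\ Finv (Fu f u x) = x) ->
  (forall y, W y -> V (Finv y) /\ Fu f u (Finv y) = y) ->
  {within W, continuous Finv} ->
  let g (rho : \bar R) : \bar R :=
    inradius 0 (f @` [set z | X z.1 /\ U z.2 /\ ((pnorm z)%:E < rho)%E]) in
  let h (r : R) : \bar R :=
    ereal_sup [set (enorm (Finv y))%:E | y in [set y | W y /\ enorm y < r]] in
  let dsup (rho : \bar R) : \bar R :=
    ereal_sup [set (d x)%:E | x in [set x | D0 x /\ ((enorm x)%:E < rho)%E]] in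
  exists2 r0 : R, 0 < r0 &
    forall r : R, 0 < r -> r < r0 ->
      (r%:E <= g (ehypot (dsup (h r)) (h r)))%E.
Proof.
move=> _ _ _ _ _ f00 D0_near _ [[_ OX] [[OU u0] [Fu_cont _]]] [del del_gt0 u_le_d].
move=> oV V0 VO oW W0 FuK FinvK Finv_cont g h dsup.
have Fu0 : Fu f u 0 = 0 by rewrite /Fu u0.
have Finv0 : Finv 0 = 0 by rewrite -{1}Fu0 (FuK 0 V0).2.
have near0 : nbhs (0 : 'rV[R]_n) [set y | W y /\ D0 (Finv y) /\ enorm (Finv y) < del].
  apply: filterI; first exact: open_nbhs_nbhs.
  have Finv_at0 := open_within_continuous_at oW (@subset_refl _ W) Finv_cont W0.
  apply: (Finv_at0 [set x | D0 x /\ enorm x < del]); rewrite Finv0.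
  by apply: filterI => //; apply: near_enorm_lt; rewrite enorm0.
have [r0 r0_gt0 r0_near] := nbhs_enormP near0.
exists r0 => // r r_gt0 r_lt_r0.
apply: ereal_sup_ubound; exists r => //; split; first exact: ltW.
move=> y; rewrite /eball /= subr0 => yr.
have [Wy [D0x x_del]] : W y /\ D0 (Finv y) /\ enorm (Finv y) < del.
  by apply: r0_near; rewrite subr0 (lt_trans yr).
have [Vx Fux] := FinvK y Wy.
exists (Finv y, u (Finv y)); last exact: Fux.
split; [exact: OX (VO _ Vx) | split; [exact: OU (VO _ Vx) | rewrite /pnorm /=]].
have [->|x_neq0] := eqVneq (Finv y) 0.
  by rewrite u0 !enorm0 expr0n addr0 sqrtr0; apply: ehypot_sup_enorm_gt0.
have x_lt_h : ((enorm (Finv y))%:E < h r)%E.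
  apply: (enorm_lt_sup_inverse oV FuK Vx) => //; last by rewrite Fux.
  exact: open_within_continuous_at oV VO Fu_cont Vx.
have d_le_dsup : ((d (Finv y))%:E <= dsup (h r))%E.
  by apply: ereal_sup_ubound; exists (Finv y).
rewrite addrC; apply: lt_ehypot (enorm_ge0 _) (enorm_ge0 _) (le_trans _ d_le_dsup) x_lt_h.
by rewrite lee_fin u_le_d.
Qed.
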